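(* Let $f(x,y)=\sum_{i,j=-\infty}^{\infty}\lambda(i,j)x^iy^j$ be a nonzero bilateral formal series with complex coefficients. Then $f$ is self-orthogonal (i.e. $f\perp f$) if and only if there exist integers $m_0,k_0$ and complex sequences $\{p_i\}_{i\in\mathbb{Z}}$, $\{q_i\}_{i\in\mathbb{Z}}$ with $p_{m_0}=0$, $q_{k_0}=0$ and $p_{k_0}=-q_{m_0}\neq 0$, such that $$f(x,y)=P(x)Q(y)-P(y)Q(x),$$ where $P(x)=\sum_{i=-\infty}^{\infty}p_ix^i$ and $Q(x)=\frac{1}{q_{m_0}}\sum_{i=-\infty}^{\infty}q_ix^i$.
   Context: A bilateral formal series in $x,y$ is a formal expression $\sum_{i,j\in\mathbb{Z}}\lambda(i,j)x^iy^j$ with complex coefficients (no convergence required). For two such series $f,g$, the expression $g(u,v)f(z,w)-g(u,w)f(z,v)+g(v,w)f(z,u)$ is a well-defined formal series in four independent variables $u,v,w,z$ (each product involves series in disjoint sets of variables). One writes $f\perp g$ (''$f$ is orthogonal to $g$'') if this expression is identically zero, and calls $f$ self-orthogonal if $f\perp f$. *)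

From HB Require Import structures.
From mathcomp Require Import all_boot all_order all_algebra.
From mathcomp Require Import complex.
From mathcomp Require Import Rstruct.
Set Implicit Arguments. Unset Strict Implicit. Unset Printing Implicit Defensive.
Import Order.TTheory GRing.Theory Num.Theory.
Local Open Scope ring_scope.

Definition Cplx : fieldType := (complex Rdefinitions.R : fieldType).

(* A bilateral formal series sum_{i,j in Z} lambda(i,j) x^i y^j,
   represented by its coefficient function lambda. *)
Definition bseries := int -> int -> Cplx.

(* f ⊥ g : the 4-variable formal series
     g(u,v)f(z,w) - g(u,w)f(z,v) + g(v,w)f(z,u)
   vanishes identically.  Its coefficient of u^a v^b w^c z^d is
     g(a,b) f(d,c) - g(a,c) f(d,b) + g(b,c) f(d,a). *)
Definition orth (f g : bseries) : Prop :=
  forall a b c d : int, g a b * f d c - g a c * f d b + g b c * f d a = 0.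

Definition self_orth (f : bseries) : Prop := orth f f.

Definition bseries_nonzero (f : bseries) : Prop := exists i j, f i j != 0.

From HB Require Import structures.
From mathcomp Require Import all_boot all_order all_algebra.
From mathcomp Require Import complex.
From mathcomp Require Import ring.
Import GRing.Theory.
Local Open Scope ring_scope.

(* Specialising the orthogonality identity at repeated indices shows that a
   nonzero self-orthogonal f vanishes on the diagonal and is antisymmetric.
   The identity at (i, j, m, k) then becomes a three-term Plücker relation
   which, for any pair with f(m, k) <> 0, writes f(i, j) through the two
   columns P = f(., m) and Q = f(., k).  Conversely, every "minor"
   p_i q_j - p_j q_i satisfies the identity by a polynomial computation. *)

Section SelfOrthogonal.

Context {R : idomainType} {I : Type} {f : I -> I -> R}.

Hypothesis f_self_orth :
  forall a b c d, f a b * f d c - f a c * f d b + f b c * f d a = 0.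

Hypothesis f_neq0 : exists i j, f i j != 0.

Lemma self_orth_diag b : f b b = 0.
Proof.
have [d [a fda_neq0]] := f_neq0; have := f_self_orth a b b d.
rewrite subrr add0r => /eqP; rewrite mulf_eq0 (negbTE fda_neq0) orbF.
by move/eqP.
Qed.

Lemma self_orth_antisym a b : f b a = - f a b.
Proof.
have := f_self_orth a b a b; have := f_self_orth b a b a.
rewrite !self_orth_diag !mul0r !subr0 => eq_ba eq_ab.
have sq0 : (f a b + f b a) ^+ 2 = 0.
  by rewrite -[RHS](addr0 0) -{1}eq_ab -eq_ba; ring.
by apply/eqP; rewrite -subr_eq0 opprK addrC -sqrf_eq0 sq0.
Qed.

Lemma self_orth_plucker i j m k :
  f i j * f m k = f i m * f j k - f j m * f i k.
Proof.
have := f_self_orth i j m k.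
rewrite (self_orth_antisym m k) (self_orth_antisym j k) (self_orth_antisym i k).
move=> eq0.
by apply/eqP; rewrite -subr_eq0 -oppr_eq0 -eq0; apply/eqP; ring.
Qed.

End SelfOrthogonal.

Lemma wedge_self_orth {R : comPzRingType} {I : Type} (p q : I -> R) a b c d :
  let f i j := p i * q j - p j * q i in
  f a b * f d c - f a c * f d b + f b c * f d a = 0.
Proof. by rewrite /=; ring. Qed.

Theorem theorem2p1 (f : bseries) :
  bseries_nonzero f ->
  (self_orth f <->
   exists (m0 k0 : int) (p q : int -> Cplx),
     [/\ p m0 = 0, q k0 = 0, p k0 = - q m0, p k0 != 0 &
       forall i j : int, f i j = p i * (q j / q m0) - p j * (q i / q m0)]).
Proof.
move=> f_neq0; split=> [f_orth | [m0 [k0 [p [q [_ _ _ _ f_wedge]]]]]].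
- have [k [m fkm_neq0]] := f_neq0.
  have anti := self_orth_antisym f_orth f_neq0.
  have fmk_neq0 : f m k != 0 by rewrite anti oppr_eq0.
  have diag0 := self_orth_diag f_orth f_neq0.
  exists m, k, (fun i => f i m), (fun i => f i k).
  split=> //= i j; apply: (mulIf fmk_neq0).
  by rewrite self_orth_plucker // mulrBl -!mulrA !mulVf ?mulr1.
- move=> a b c d; rewrite !f_wedge.
  (* [exact: wedge_self_orth ...] elaborates the lemma against the goal and
     gets lost unfolding the ring structure of [Cplx]; checking the
     instantiated statement by conversion is immediate. *)
  have := wedge_self_orth p (fun i => q i / q m0) a b c d; exact.
Qed.
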